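(* In the recursion below (with any $\eta>0$, any initial policy $\pi_0$, $Q_1\equiv0$), suppose the bonuses $\mathrm{CB}_k\ge0$ are valid for every $k=1,\dots,K$. Then $$\sum_{k=1}^K\big(\langle\mu^*,r\rangle-\langle\mu^{\pi_k},r\rangle\big)\le 2\sum_{k=1}^K\langle\mu^{\pi_k},\mathrm{CB}_k\rangle+2H+\frac1\eta\mathcal H(\pi^*\|\pi_0)+\frac{\eta H^3K}{2}.$$
   Context: Discounted MDP with finite $\mathcal X$, $\mathcal A$, reward $r:\mathcal X\times\mathcal A\to[0,1]$, transition kernel $P$, discount $\gamma\in(0,1)$, initial distribution $\nu_0$, $H=1/(1-\gamma)$. $(Pf)(x,a)=\sum_{x'}P(x'|x,a)f(x')$. For a policy $\pi$, $\nu^\pi(x)=(1-\gamma)\sum_{t\ge0}\gamma^t\mathbb P_\pi[X_t=x]$ with $X_0\sim\nu_0$, $\mu^\pi(x,a)=\nu^\pi(x)\pi(a|x)$, $\langle\mu,f\rangle=\sum_{x,a}\mu(x,a)f(x,a)$; $\pi^*$ is an optimal policy, $\mu^*=\mu^{\pi^*}$. Conditional relative entropy: $\mathcal H(\pi\|\pi')=\sum_x\nu^\pi(x)\mathrm{KL}(\pi(\cdot|x)\|\pi'(\cdot|x))$. Recursion: $V_k(x)=\frac1\eta\log\sum_a\pi_{k-1}(a|x)e^{\eta Q_k(x,a)}$, $\pi_k(a|x)=\pi_{k-1}(a|x)e^{\eta(Q_k(x,a)-V_k(x))}$, $Q_{k+1}=\Pi_H[r+\mathrm{CB}_k+\gamma\widehat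 P_kV_k]$, where $\widehat P_k$ is any real function on $\mathcal X\times\mathcal A\times\mathcal X$ acting by $(\widehat P_kf)(x,a)=\sum_{x'}\widehat P_k(x'|x,a)f(x')$, and $\Pi_Hf(z)=\max(\min(f(z),H),0)$. Validity for epoch $k$: for all $(x,a)$, $\big|\gamma\sum_{x'}(P(x'|x,a)-\widehat P_k(x'|x,a))V_k(x')\big|\le\mathrm{CB}_k(x,a)$. *)

From HB Require Import structures.
From mathcomp Require Import all_boot all_order all_algebra.
From mathcomp Require Import all_classical all_reals all_analysis.
Set Implicit Arguments. Unset Strict Implicit. Unset Printing Implicit Defensive.
Import Order.TTheory GRing.Theory Num.Theory numFieldNormedType.Exports.
Local Open Scope ring_scope.

Section MDP.
Variables (R : realType) (X A : finType).

Definition is_distr (T : finType) (p : T -> R) :=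
  (forall t, 0 <= p t) /\ \sum_(t : T) p t = 1.

(* transition kernel P x a x' = P(x' | x, a) *)
Definition is_kernel (P : X -> A -> X -> R) :=
  forall x a, is_distr (P x a).

(* stationary stochastic policy: pi x a = pi(a | x) *)
Definition is_policy (pi : X -> A -> R) := forall x, is_distr (pi x).

(* state distribution at time t under pi, starting from d0:
   state_dist t x = P_pi[X_t = x] *)
Fixpoint state_dist (P : X -> A -> X -> R) (pi : X -> A -> R)
    (d0 : X -> R) (t : nat) : X -> R :=
  match t with
  | 0 => d0
  | t'.+1 => fun x' =>
      \sum_(x : X) \sum_(a : A) state_dist P pi d0 t' x * pi x a * P x a x'
  end.

Definition rseries (u : nat -> R) : R := limn (series u).

Definition occ_state (P : X -> A -> X -> R) (g : R) (nu0 : X -> R)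
    (pi : X -> A -> R) (x : X) : R :=
  (1 - g) * rseries (fun t => g ^+ t * state_dist P pi nu0 t x).

Definition occ (P : X -> A -> X -> R) (g : R) (nu0 : X -> R)
    (pi : X -> A -> R) (x : X) (a : A) : R :=
  occ_state P g nu0 pi x * pi x a.

Definition inner (mu f : X -> A -> R) : R :=
  \sum_(x : X) \sum_(a : A) mu x a * f x a.

Definition dirac_st (x : X) : X -> R := fun y => if y == x then 1 else 0.

Definition value (P : X -> A -> X -> R) (g : R) (r : X -> A -> R)
    (pi : X -> A -> R) (x : X) : R :=
  rseries (fun t => g ^+ t *
     \sum_(y : X) \sum_(a : A) state_dist P pi (dirac_st x) t y * pi y a * r y a).

Definition is_optimal (P : X -> A -> X -> R) (g : R) (r : X -> A -> R)
    (pis : X -> A -> R) :=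
  is_policy pis /\
  forall pi, is_policy pi -> forall x, value P g r pi x <= value P g r pis x.

(* KL(p || q) for distributions on A, in extended reals:
   +oo if p is not absolutely continuous w.r.t. q, with 0 ln 0 = 0 *)
Definition KL (p q : A -> R) : \bar R :=
  if [forall a, (0 < p a) ==> (0 < q a)]
  then (\sum_(a : A | 0 < p a) p a * ln (p a / q a))%:E
  else +oo%E.

(* conditional relative entropy H(pi || pi') = sum_x nu^pi(x) KL(pi(.|x) || pi'(.|x)),
   with the convention 0 * (+oo) = 0 *)
Definition cond_rel_ent (P : X -> A -> X -> R) (g : R) (nu0 : X -> R)
    (pi pi' : X -> A -> R) : \bar R :=
  (\sum_(x : X | (0 < occ_state P g nu0 pi x)%R)
      (occ_state P g nu0 pi x)%:E * KL (pi x) (pi' x))%E.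

Definition clipH (H v : R) : R := Num.max (Num.min v H) 0.

Definition applyP (Ph : X -> A -> X -> R) (f : X -> R) (x : X) (a : A) : R :=
  \sum_(x' : X) Ph x a x' * f x'.

End MDP.

From HB Require Import structures.
From mathcomp Require Import all_boot all_order all_algebra.
From mathcomp Require Import all_classical all_reals all_analysis.
From mathcomp Require Import ring lra.
Import Order.TTheory GRing.Theory Num.Theory numFieldNormedType.Exports.
Set Implicit Arguments. Unset Strict Implicit. Unset Printing Implicit Defensive.
Local Open Scope ring_scope.

(* Write H = 1/(1-g), mu_k = mu^{pi_k}, nu_k = nu^{pi_k}, and mu*, nu* for the
   comparator; only its being a policy is used, not its optimality.
   The argument has three ingredients, developed in this order.
   1. Occupancy measures: nu^p is a probability on states satisfying the flow
      equation nu = (1-g) nu0 + g P^T mu^p, hence <mu^p, g P W> = <nu^p, W> -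
      (1-g) <nu0, W>; and a per-state l1 policy change delta moves <mu^p, f>
      by at most h/2 * H delta when f takes values in [0, h].
   2. One exponential-weights step: V_k is the soft maximum of Q_k under
      pi_{k-1}, so V_k lies in [0, H], V_k <= <pi_k, Q_k>, the step moves
      pi_{k-1} by at most eta H in l1, and ln pi_k - ln pi_{k-1} = eta (Q_k - V_k).
   3. Optimism: valid bonuses sandwich Q_{k+1} between r + g P V_k and
      r + 2 CB_k + g P V_k.
   Combining them gives a per-epoch regret inequality.  Summed over k, the
   comparator values telescope (<= H), the policy drifts sum to at most
   K eta H^3 / 2, and the mirror-descent terms telescope state by state in
   ln pi_k into at most KL(pis || pi_0) / eta by Gibbs' inequality. *)

Section Expectations.
Variable R : realType.
Local Open Scope classical_set_scope.

Definition expect (T : finType) (d W : T -> R) : R := \sum_(t : T) d t * W t.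

Lemma expect_le (T : finType) (d W : T -> R) (c : R) :
  is_distr d -> (forall t, W t <= c) -> expect d W <= c.
Proof.
move=> [d_ge0 d_sum1] Wc; rewrite -[leRHS]mul1r -d_sum1 mulr_suml.
by apply: ler_sum => t _; rewrite ler_wpM2l.
Qed.

Lemma expect_support (T : finType) (d f : T -> R) :
  is_distr d -> \sum_(t | 0 < d t) d t * f t = expect d f.
Proof.
move=> [d_ge0 _]; rewrite /expect [RHS](bigID (fun t => 0 < d t)) /=.
rewrite [X in _ = _ + X]big1 ?addr0 // => t; rewrite lt_def d_ge0 andbT negbK.
by move/eqP->; rewrite mul0r.
Qed.

Lemma distr_le1 (T : finType) (d : T -> R) (t : T) : is_distr d -> d t <= 1.
Proof. by move=> [d_ge0 <-]; rewrite (bigD1 t) //= lerDl sumr_ge0. Qed.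

Lemma cvg_sum_fin (I : finType) (u : I -> nat -> R) (l : I -> R) :
  (forall i, u i n @[n --> \oo] --> l i) ->
  (\sum_i u i n) @[n --> \oo] --> \sum_i l i.
Proof. by move=> cvg_u; apply: cvg_big => //; exact: add_continuous. Qed.

End Expectations.

Section Inner.
Variables (R : realType) (X A : finType).
Implicit Types (m f : X -> A -> R).

Lemma innerD m f1 f2 : inner m (fun x a => f1 x a + f2 x a) = inner m f1 + inner m f2.
Proof.
rewrite /inner -big_split; apply: eq_bigr => x _; rewrite -big_split.
by apply: eq_bigr => a _; rewrite mulrDr.
Qed.

Lemma innerZ m c f : inner m (fun x a => c * f x a) = c * inner m f.
Proof.
rewrite /inner mulr_sumr; apply: eq_bigr => x _; rewrite mulr_sumr.
by apply: eq_bigr => a _; rewrite mulrCA.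
Qed.

Lemma ler_inner m f1 f2 : (forall x a, 0 <= m x a) ->
  (forall x a, f1 x a <= f2 x a) -> inner m f1 <= inner m f2.
Proof.
by move=> m_ge0 le_f; apply: ler_sum => x _; apply: ler_sum => a _; rewrite ler_wpM2l.
Qed.

Lemma inner_ge0 m f : (forall x a, 0 <= m x a) -> (forall x a, 0 <= f x a) ->
  0 <= inner m f.
Proof.
by move=> m_ge0 f_ge0; apply: sumr_ge0 => x _; apply: sumr_ge0 => a _; rewrite mulr_ge0.
Qed.

(* For two measures of equal mass and f with values in [0, h], centring f at
   h/2 shows that <m' - m, f> is at most h/2 times the l1 distance. *)
Lemma inner_diff_le m m' f h :
  \sum_x \sum_a m' x a = \sum_x \sum_a m x a -> (forall x a, 0 <= f x a <= h) ->
  inner m' f - inner m f <= h / 2 * \sum_x \sum_a `|m' x a - m x a|.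
Proof.
move=> same_mass f_range.
have no_shift : \sum_x \sum_a (m' x a - m x a) * (h / 2) = 0.
  under eq_bigr do rewrite -mulr_suml sumrB.
  by rewrite -mulr_suml sumrB same_mass subrr mul0r.
have centred : \sum_x \sum_a (m' x a - m x a) * (f x a - h / 2) =
    inner m' f - inner m f - \sum_x \sum_a (m' x a - m x a) * (h / 2).
  rewrite /inner -!sumrB; apply: eq_bigr => x _.
  by rewrite -!sumrB; apply: eq_bigr => a _; ring.
rewrite no_shift subr0 in centred; rewrite -centred.
rewrite mulr_sumr; apply: ler_sum => x _; rewrite mulr_sumr; apply: ler_sum => a _.
apply: le_trans (ler_norm _) _; rewrite normrM mulrC ler_wpM2r //.
have /andP[f_ge0 f_leh] := f_range x a.
by rewrite ler_norml; apply/andP; split; lra.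
Qed.

End Inner.

Section Clipping.
Variable R : realType.

Lemma clipH_range (h v : R) : 0 <= h -> 0 <= clipH h v <= h.
Proof.
by move=> h_ge0; rewrite /clipH le_max lexx orbT ge_max h_ge0 andbT ge_min lexx orbT.
Qed.

Lemma clipH_between (h u v : R) : 0 <= u <= h -> u <= v -> u <= clipH h v <= v.
Proof.
move=> /andP[u_ge0 u_leh] le_uv; rewrite /clipH.
have min_ge0 : 0 <= Num.min v h.
  by rewrite le_min (le_trans u_ge0 le_uv) (le_trans u_ge0 u_leh).
by rewrite max_l // le_min le_uv u_leh /= ge_min lexx.
Qed.

End Clipping.

Section Occupancy.
Variables (R : realType) (X A : finType).
Variables (P : X -> A -> X -> R) (g : R) (nu0 : X -> R).
Hypotheses (HP : is_kernel P) (Hg : 0 < g < 1) (Hnu : is_distr nu0).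
Local Open Scope classical_set_scope.

Local Notation nu := (occ_state P g nu0).
Local Notation mu := (occ P g nu0).

Let g_ge0 : 0 <= g. Proof. by case/andP: Hg => /ltW. Qed.
Let g_lt1 : g < 1. Proof. by case/andP: Hg. Qed.

Section FixedPolicy.
Variable p : X -> A -> R.
Hypothesis Hp : is_policy p.

Lemma state_dist_distr t : is_distr (state_dist P p nu0 t).
Proof.
elim: t => [|t [sd_ge0 sd_sum1]] //=; split.
  move=> y; apply: sumr_ge0 => x _; apply: sumr_ge0 => a _.
  by rewrite !mulr_ge0 //; [case: (Hp x) | case: (HP x a)].
transitivity (\sum_x \sum_a state_dist P p nu0 t x * p x a * \sum_y P x a y).
  rewrite exchange_big; apply: eq_bigr => x _; rewrite exchange_big.
  by apply: eq_bigr => a _; rewrite mulr_sumr.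
rewrite -sd_sum1; apply: eq_bigr => x _.
under eq_bigr do rewrite (proj2 (HP x _)) mulr1.
by rewrite -mulr_sumr (proj2 (Hp x)) mulr1.
Qed.

Let disc (x : X) (t : nat) : R := g ^+ t * state_dist P p nu0 t x.

Let disc_ge0 x t : 0 <= disc x t.
Proof. by rewrite mulr_ge0 ?exprn_ge0 //; case: (state_dist_distr t). Qed.

(* The series is dominated by the geometric series of ratio g < 1. *)
Let disc_cvg x : cvgn (series (disc x)).
Proof.
apply: (@series_le_cvg _ (disc x) (geometric 1 g)).
- exact: disc_ge0.
- by move=> n; exact: geometric_ge0.
- move=> n; rewrite /= mul1r /disc ler_piMr ?exprn_ge0 ?distr_le1 //.
  exact: state_dist_distr.
- by apply: is_cvg_geometric_series; rewrite ger0_norm.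
Qed.

(* One step of the Markov chain, read on the partial sums. *)
Let disc_series_rec y n : series (disc y) n.+1 =
  nu0 y + g * \sum_x \sum_a p x a * P x a y * series (disc x) n.
Proof.
rewrite !seriesEnat /= big_nat_recl // /disc expr0 mul1r /=; congr (_ + _).
transitivity (\sum_(0 <= i < n) \sum_x \sum_a
    g ^+ i.+1 * state_dist P p nu0 i x * p x a * P x a y).
  apply: eq_bigr => i _; rewrite mulr_sumr; apply: eq_bigr => x _.
  by rewrite mulr_sumr; apply: eq_bigr => a _; ring.
rewrite exchange_big mulr_sumr; apply: eq_bigr => x _.
rewrite exchange_big mulr_sumr; apply: eq_bigr => a _.
by rewrite seriesEnat /= !mulr_sumr; apply: eq_bigr => i _; rewrite exprS; ring.
Qed.

Lemma occ_flow y :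
  nu p y = (1 - g) * nu0 y + g * \sum_x \sum_a nu p x * p x a * P x a y.
Proof.
pose L x := limn (series (disc x)).
have L_fix : L y = nu0 y + g * \sum_x \sum_a p x a * P x a y * L x.
  have lim_lhs : series (disc y) n.+1 @[n --> \oo] --> L y.
    by rewrite cvg_shiftS; exact: disc_cvg.
  have lim_rhs : (nu0 y + g * \sum_x \sum_a p x a * P x a y * series (disc x) n)
      @[n --> \oo] --> nu0 y + g * \sum_x \sum_a p x a * P x a y * L x.
    apply: cvgD; first exact: cvg_cst.
    apply: (cvgM (cvg_cst g)).
    apply: cvg_sum_fin => x; apply: cvg_sum_fin => a.
    apply: (cvgM (cvg_cst _)); exact: disc_cvg.
  have shift_rec : (fun n => series (disc y) n.+1) =
      (fun n => nu0 y + g * \sum_x \sum_a p x a * P x a y * series (disc x) n).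
    by apply/funext => n; rewrite disc_series_rec.
  rewrite shift_rec in lim_lhs.
  exact: cvg_unique lim_lhs lim_rhs.
rewrite /occ_state /rseries -/(L y) L_fix mulrDr; congr (_ + _).
rewrite mulrCA; congr (_ * _); rewrite mulr_sumr; apply: eq_bigr => x _.
by rewrite mulr_sumr; apply: eq_bigr => a _; rewrite /L; ring.
Qed.

Lemma occ_state_ge0 x : 0 <= nu p x.
Proof.
rewrite /occ_state /rseries mulr_ge0 ?subr_ge0 ?(ltW g_lt1) //.
apply: limr_ge; first exact: disc_cvg.
by near=> n; rewrite seriesEnat /=; apply: sumr_ge0 => i _; exact: disc_ge0.
Unshelve. all: by end_near.
Qed.

(* nu^p is a probability distribution: summing the flow equation over y
   gives S = (1 - g) + g S. *)
Lemma occ_state_distr : is_distr (nu p).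
Proof.
split; first exact: occ_state_ge0.
set S := \sum_y _.
have S_fix : S = (1 - g) + g * S.
  rewrite {1}/S; under eq_bigr do rewrite occ_flow.
  rewrite big_split /= -mulr_sumr (proj2 Hnu) mulr1 -mulr_sumr.
  congr (_ + _ * _); rewrite exchange_big; apply: eq_bigr => x _.
  transitivity (\sum_a nu p x * p x a * \sum_y P x a y).
    by rewrite exchange_big; apply: eq_bigr => a _; rewrite mulr_sumr.
  under eq_bigr do rewrite (proj2 (HP x _)) mulr1.
  by rewrite -mulr_sumr (proj2 (Hp x)) mulr1.
have one_sub_g_neq0 : 1 - g != 0 by rewrite subr_eq0 eq_sym lt_eqF.
apply: (mulfI one_sub_g_neq0); rewrite mulr1 mulrBl mul1r {1}S_fix; ring.
Qed.

Lemma occ_ge0 x a : 0 <= mu p x a.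
Proof. by rewrite /occ mulr_ge0 ?occ_state_ge0 //; case: (Hp x). Qed.

Lemma occ_mass : \sum_x \sum_a mu p x a = 1.
Proof.
rewrite -(proj2 occ_state_distr); apply: eq_bigr => x _.
by rewrite /occ -mulr_sumr (proj2 (Hp x)) mulr1.
Qed.

Lemma inner_occE f : inner (mu p) f = expect (nu p) (fun x => expect (p x) (f x)).
Proof.
apply: eq_bigr => x _; rewrite /expect mulr_sumr.
by apply: eq_bigr => a _; rewrite /occ mulrA.
Qed.

(* The flow equation in dual form: <mu^p, g P W> = <nu^p, W> - (1 - g) <nu0, W>. *)
Lemma inner_occ_next W :
  inner (mu p) (fun x a => g * applyP P W x a) = expect (nu p) W - (1 - g) * expect nu0 W.
Proof.
have -> : expect (nu p) W = \sum_y ((1 - g) * (nu0 y * W y) +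
    g * (\sum_x \sum_a nu p x * p x a * P x a y) * W y).
  by apply: eq_bigr => y _; rewrite occ_flow; ring.
rewrite big_split /= -mulr_sumr addrC addrK.
transitivity (\sum_x \sum_a \sum_y g * (nu p x * p x a * P x a y) * W y).
  apply: eq_bigr => x _; apply: eq_bigr => a _.
  by rewrite /occ /applyP !mulr_sumr; apply: eq_bigr => y _; ring.
symmetry; transitivity (\sum_y \sum_x \sum_a g * (nu p x * p x a * P x a y) * W y).
  apply: eq_bigr => y _; rewrite mulr_sumr mulr_suml; apply: eq_bigr => x _.
  by rewrite mulr_sumr mulr_suml.
by rewrite exchange_big; apply: eq_bigr => x _; exact: exchange_big.
Qed.

End FixedPolicy.

(* Changing the policy moves the occupancy by at most 1/(1-g) times the
   average per-state l1 change: ||nu' - nu||_1 <= g ||mu' - mu||_1 by the flow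
   equation, and ||mu' - mu||_1 <= ||nu' - nu||_1 + <nu, ||p' - p||_1>. *)
Lemma occ_l1_diff p p' : is_policy p -> is_policy p' ->
  \sum_x \sum_a `|mu p' x a - mu p x a|
  <= (1 - g)^-1 * expect (nu p) (fun x => \sum_a `|p' x a - p x a|).
Proof.
move=> Hp Hp'; set M := \sum_x \sum_a _.
have state_l1 : \sum_y `|nu p' y - nu p y| <= g * M.
  apply: (@le_trans _ _ (\sum_y g * \sum_x \sum_a `|mu p' x a - mu p x a| * P x a y)).
    apply: ler_sum => y _; rewrite (occ_flow Hp' y) (occ_flow Hp y).
    rewrite opprD addrACA subrr add0r -mulrBr normrM ger0_norm // ler_wpM2l //.
    rewrite -sumrB; apply: le_trans (ler_norm_sum _ _ _) _; apply: ler_sum => x _.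
    rewrite -sumrB; apply: le_trans (ler_norm_sum _ _ _) _; apply: ler_sum => a _.
    by rewrite -mulrBl normrM (ger0_norm (proj1 (HP x a) y)).
  rewrite -mulr_sumr ler_wpM2l // exchange_big; apply: ler_sum => x _.
  rewrite exchange_big; apply: ler_sum => a _.
  by rewrite -mulr_sumr (proj2 (HP x a)) mulr1.
have pair_l1 : M <= \sum_y `|nu p' y - nu p y| +
    expect (nu p) (fun x => \sum_a `|p' x a - p x a|).
  rewrite /expect -big_split /=; apply: ler_sum => x _.
  have -> : `|nu p' x - nu p x| = \sum_a `|nu p' x - nu p x| * p' x a.
    by rewrite -mulr_sumr (proj2 (Hp' x)) mulr1.
  rewrite mulr_sumr -big_split; apply: ler_sum => a _ /=.
  rewrite /occ (_ : _ - _ = (nu p' x - nu p x) * p' x a + nu p x * (p' x a - p x a));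
    last by ring.
  apply: le_trans (ler_normD _ _) _.
  rewrite (normrM (nu p' x - nu p x)) (normrM (nu p x)).
  by rewrite (ger0_norm (proj1 (Hp' x) a)) (ger0_norm (occ_state_ge0 Hp x)).
have one_sub_g_gt0 : 0 < 1 - g by rewrite subr_gt0.
by rewrite ler_pdivlMl // mulrBl mul1r; lra.
Qed.

Lemma inner_policy_change p p' f h delta : is_policy p -> is_policy p' ->
  0 <= h -> (forall x a, 0 <= f x a <= h) ->
  (forall x, \sum_a `|p' x a - p x a| <= delta) ->
  inner (mu p') f - inner (mu p) f <= h / 2 * ((1 - g)^-1 * delta).
Proof.
move=> Hp Hp' h_ge0 f_range tv_le.
apply: le_trans (inner_diff_le _ f_range) _; first by rewrite !occ_mass.
rewrite ler_wpM2l ?divr_ge0 //; apply: le_trans (occ_l1_diff Hp Hp') _.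
rewrite ler_wpM2l ?invr_ge0 ?subr_ge0 ?(ltW g_lt1) //.
by apply: expect_le => //; exact: occ_state_distr.
Qed.

End Occupancy.

(* |e^(y-l) - 1| <= l + e^(y-l) (c - l) for y, l in [0, c]: the lower side
   is e^(y-l) >= 1 + (y - l), the upper side e^(l-y) >= 1 + (l - y). *)
Lemma abs_expR_sub1_le (R : realType) (y l c : R) : 0 <= y <= c -> 0 <= l <= c ->
  `|expR (y - l) - 1| <= l + expR (y - l) * (c - l).
Proof.
move=> /andP[y_ge0 y_lec] /andP[l_ge0 l_lec].
have w_gt0 := expR_gt0 (y - l).
have tangent := expR_ge1Dx (y - l).
have w_inv : expR (y - l) * expR (l - y) = 1 by rewrite -expRD subrKA subrr expR0.
have tangent' : expR (y - l) * (1 + (l - y)) <= 1.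
  by rewrite -[leRHS]w_inv ler_wpM2l ?expR_ge1Dx ?ltW.
by rewrite ler_norml; apply/andP; split; nra.
Qed.

Section ExponentialWeights.
Variables (R : realType) (A : finType).
Variables (p q p' : A -> R) (eta h V : R).
Hypotheses (Hp : is_distr p) (Heta : 0 < eta) (Hq : forall a, 0 <= q a <= h).
Hypothesis HV : V = eta^-1 * ln (\sum_a p a * expR (eta * q a)).
Hypothesis Hp' : forall a, p' a = p a * expR (eta * (q a - V)).

Let Z := \sum_a p a * expR (eta * q a).

Let Z_ge1 : 1 <= Z.
Proof.
rewrite -(proj2 Hp) /Z; apply: ler_sum => a _; rewrite ler_peMr ?(proj1 Hp a) //.
have /andP[q_ge0 _] := Hq a.
by apply: le_trans (expR_ge1Dx _); rewrite lerDl (mulr_ge0 (ltW Heta)).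
Qed.

Let Z_gt0 : 0 < Z. Proof. exact: lt_le_trans ltr01 Z_ge1. Qed.

Let Z_le : Z <= expR (eta * h).
Proof.
apply: expect_le => // a; have /andP[_ q_leh] := Hq a.
by rewrite ler_expR ler_pM2l.
Qed.

Let expR_etaV : expR (eta * V) = Z.
Proof. by rewrite HV mulrA divff ?gt_eqF // mul1r lnK // posrE. Qed.

Let ew_weightE a : p' a = p a * expR (eta * q a) / Z.
Proof. by rewrite Hp' mulrBr expRB expR_etaV mulrA. Qed.

Lemma ew_value_range : 0 <= V <= h.
Proof.
rewrite HV -/Z mulr_ge0 ?invr_ge0 ?(ltW Heta) ?ln_ge0 //= ler_pdivrMl //.
by rewrite -[leRHS](expRK (eta * h)) ler_ln ?posrE ?expR_gt0.
Qed.

Lemma ew_distr : is_distr p'.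
Proof.
split=> [a|]; first by rewrite Hp' mulr_ge0 ?(proj1 Hp a) ?expR_ge0.
by under eq_bigr do rewrite ew_weightE; rewrite -mulr_suml divff ?gt_eqF.
Qed.

(* The soft maximum is below the mean of q under the tilted distribution:
   by e^u (1 - u) <= 1 with u = eta q - ln Z, E_p[e^(eta q) (eta q - ln Z)] >= 0. *)
Lemma ew_value_le_mean : V <= expect p' q.
Proof.
have entropy_ge0 : 0 <= \sum_a p a * expR (eta * q a) * (eta * q a - ln Z).
  apply: (@le_trans _ _ (\sum_a p a * (expR (eta * q a) - Z))).
    by under eq_bigr do rewrite mulrBr; rewrite sumrB -mulr_suml (proj2 Hp) mul1r subrr.
  apply: ler_sum => a _; rewrite -mulrA ler_wpM2l ?(proj1 Hp a) //.
  set u := eta * q a - ln Z.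
  have -> : expR (eta * q a) = Z * expR u.
    by rewrite /u expRB lnK ?posrE // mulrCA divff ?mulr1 ?gt_eqF.
  have e_gt0 := expR_gt0 u; have tangent := expR_ge1Dx (- u).
  have e_inv : expR u * expR (- u) = 1 by rewrite -expRD subrr expR0.
  have : expR u * (1 - u) <= 1 by rewrite -[leRHS]e_inv ler_pM2l //; lra.
  by have := Z_gt0; nra.
have -> : expect p' q = (eta * Z)^-1 * \sum_a p a * expR (eta * q a) * (eta * q a).
  rewrite /expect mulr_sumr; apply: eq_bigr => a _; rewrite ew_weightE.
  by field; rewrite !gt_eqF.
have : ln Z * Z <= \sum_a p a * expR (eta * q a) * (eta * q a).
  rewrite -subr_ge0 (_ : _ - _ = \sum_a p a * expR (eta * q a) * (eta * q a - ln Z)) //.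
  by rewrite /Z mulr_sumr -sumrB; apply: eq_bigr => a _; ring.
by move=> lnZ_le; rewrite HV -/Z invfM -mulrA ler_pM2l ?invr_gt0 // ler_pdivlMl // mulrC.
Qed.

Lemma ew_l1_step : \sum_a `|p' a - p a| <= eta * h.
Proof.
set l := ln Z.
have l_range : 0 <= l <= eta * h.
  by rewrite ln_ge0 ?Z_ge1 //= -[leRHS](expRK (eta * h)) ler_ln ?posrE ?expR_gt0 ?Z_gt0 ?Z_le.
have p'_tilt a : p' a = p a * expR (eta * q a - l).
  by rewrite ew_weightE /l expRB lnK ?posrE ?Z_gt0 // mulrA.
apply: (@le_trans _ _ (\sum_a p a * (l + expR (eta * q a - l) * (eta * h - l)))).
  apply: ler_sum => a _; rewrite p'_tilt -{2}[p a]mulr1 -mulrBr normrM.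
  rewrite ger0_norm ?(proj1 Hp a) // ler_wpM2l ?(proj1 Hp a) //.
  have /andP[q_ge0 q_leh] := Hq a.
  by apply: abs_expR_sub1_le => //; rewrite (mulr_ge0 (ltW Heta) q_ge0) ler_pM2l.
under eq_bigr do rewrite mulrDr mulrA -p'_tilt.
rewrite big_split /= -!mulr_suml (proj2 Hp) (proj2 ew_distr) !mul1r; lra.
Qed.

Lemma ew_log_ratio a : 0 < p a -> ln (p' a) - ln (p a) = eta * (q a - V).
Proof. by move=> pa; rewrite Hp' lnM ?posrE ?expR_gt0 // expRK addrAC subrr add0r. Qed.

Lemma ew_mirror_identity (ps : A -> R) : is_distr ps -> (forall a, 0 < ps a -> 0 < p a) ->
  expect ps q - V = eta^-1 * \sum_(a | 0 < ps a) ps a * (ln (p' a) - ln (p a)).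
Proof.
move=> Hps supp.
rewrite (eq_bigr (fun a => eta * (ps a * (q a - V)))); last first.
  by move=> a /supp /ew_log_ratio ->; rewrite mulrCA.
rewrite -mulr_sumr mulKf ?gt_eqF // (expect_support (fun a => q a - V) Hps) /expect /=.
by symmetry; under eq_bigr do rewrite mulrBr; rewrite sumrB -mulr_suml (proj2 Hps) mul1r.
Qed.

End ExponentialWeights.

Section KullbackLeibler.
Variables (R : realType) (A : finType).
Implicit Types (p q : A -> R).

Definition kl_sum p q : R := \sum_(a | 0 < p a) p a * ln (p a / q a).

Lemma KL_finite p q : [forall a, (0 < p a) ==> (0 < q a)] -> KL p q = (kl_sum p q)%:E.
Proof. by rewrite /KL => ->. Qed.

(* Gibbs' inequality, from ln t <= t - 1. *)
Lemma kl_sum_ge0 p q : is_distr p -> is_distr q ->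
  (forall a, 0 < p a -> 0 < q a) -> 0 <= kl_sum p q.
Proof.
move=> Hp Hq abs_cont.
apply: (@le_trans _ _ (\sum_(a | 0 < p a) (p a - q a))).
  rewrite sumrB subr_ge0 (_ : \sum_(a | 0 < p a) p a = 1).
    rewrite -(proj2 Hq) [leRHS](bigID (fun a => 0 < p a)) /= lerDl.
    by apply: sumr_ge0 => a _; exact: (proj1 Hq a).
  transitivity (\sum_(a | 0 < p a) p a * 1); first by apply: eq_bigr => a _; rewrite mulr1.
  rewrite (expect_support (fun=> 1) Hp) -[RHS](proj2 Hp).
  by apply: eq_bigr => a _; rewrite mulr1.
apply: ler_sum => a pa; have qa := abs_cont a pa.
have ln_le : ln (q a / p a) <= q a / p a - 1.
  have ratio_gt0 : 0 < q a / p a by rewrite divr_gt0.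
  rewrite {1}(_ : q a / p a = 1 + (q a / p a - 1)); last by rewrite addrC subrK.
  by apply: le_ln1Dx; lra.
have := ler_wpM2l (ltW pa) ln_le; rewrite mulrBr mulr1 mulrCA divff ?gt_eqF // mulr1.
by rewrite -[p a / q a]invf_div lnV ?posrE ?divr_gt0 // mulrN lerNr opprB.
Qed.

Lemma KL_ge0 p q : is_distr p -> is_distr q -> (0 <= KL p q)%E.
Proof.
move=> Hp Hq; rewrite /KL; case: ifP => [/forallP abs_cont|_]; last exact: leey.
by rewrite lee_fin kl_sum_ge0 // => a; exact/implyP/abs_cont.
Qed.

Lemma kl_sum_sub p q q' :
  (forall a, 0 < p a -> 0 < q a) -> (forall a, 0 < p a -> 0 < q' a) ->
  kl_sum p q - kl_sum p q' = \sum_(a | 0 < p a) p a * (ln (q' a) - ln (q a)).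
Proof.
move=> pos_q pos_q'; rewrite /kl_sum -sumrB; apply: eq_bigr => a pa.
by rewrite !ln_div ?posrE ?pos_q ?pos_q' //; ring.
Qed.

End KullbackLeibler.

Section ConditionalEntropy.
Variables (R : realType) (X A : finType).
Variables (P : X -> A -> X -> R) (g : R) (nu0 : X -> R).
Local Notation nu := (occ_state P g nu0).

Lemma cond_rel_ent_finite (p p' : X -> A -> R) :
  (forall x, 0 < nu p x -> [forall a, (0 < p x a) ==> (0 < p' x a)]) ->
  cond_rel_ent P g nu0 p p' = (\sum_(x | 0 < nu p x) nu p x * kl_sum (p x) (p' x))%:E.
Proof.
move=> abs_cont; rewrite /cond_rel_ent -sumEFin; apply: eq_bigr => x /abs_cont.
by move/KL_finite ->; rewrite EFinM.
Qed.

(* One state of positive occupancy where p' misses part of the support of p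
   makes the conditional relative entropy infinite, all other terms being >= 0. *)
Lemma cond_rel_ent_infinite (p p' : X -> A -> R) (x0 : X) :
  is_kernel P -> 0 < g < 1 -> is_distr nu0 -> is_policy p -> is_policy p' ->
  0 < nu p x0 -> ~~ [forall a, (0 < p x0 a) ==> (0 < p' x0 a)] ->
  cond_rel_ent P g nu0 p p' = +oo%E.
Proof.
move=> HP Hg Hnu Hp Hp' nu_x0 not_ac.
rewrite /cond_rel_ent (bigD1 x0) //= {1}/KL (negbTE not_ac) gt0_muley ?lte_fin //.
apply: addye; rewrite gt_eqF // (lt_le_trans ltNy0) // sume_ge0 // => x _.
by rewrite mule_ge0 ?KL_ge0 // lee_fin (occ_state_ge0 HP Hg Hnu Hp).
Qed.

End ConditionalEntropy.

Section OptimisticPolicyIteration.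
Variables (R : realType) (X A : finType).
Variables (r : X -> A -> R) (P : X -> A -> X -> R) (g : R) (nu0 : X -> R).
Variables (pis : X -> A -> R) (eta : R) (K : nat).
Variables (pi : nat -> X -> A -> R) (Q : nat -> X -> A -> R) (V : nat -> X -> R).
Variables (CB : nat -> X -> A -> R) (Ph : nat -> X -> A -> X -> R).
Hypotheses (Hr : forall x a, 0 <= r x a <= 1) (HP : is_kernel P) (Hg : 0 < g < 1).
Hypotheses (Hnu : is_distr nu0) (Hpis : is_policy pis) (Heta : 0 < eta).
Hypotheses (Hpi0 : is_policy (pi 0%N)) (HQ1 : forall x a, Q 1%N x a = 0).
Hypothesis HV : forall k, (0 < k)%N -> forall x,
  V k x = eta^-1 * ln (\sum_(a : A) pi k.-1 x a * expR (eta * Q k x a)).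
Hypothesis Hpi : forall k, (0 < k)%N -> forall x a,
  pi k x a = pi k.-1 x a * expR (eta * (Q k x a - V k x)).
Hypothesis HQ : forall k, (0 < k)%N -> forall x a,
  Q k.+1 x a = clipH (1 - g)^-1 (r x a + CB k x a + g * applyP (Ph k) (V k) x a).
Hypothesis Hval : forall k, (0 < k <= K)%N -> forall x a,
  `| g * \sum_(x' : X) (P x a x' - Ph k x a x') * V k x' | <= CB k x a.

Local Notation H := ((1 - g)^-1).
Local Notation nu := (occ_state P g nu0).
Local Notation mu := (occ P g nu0).

Let H_gt0 : 0 < H. Proof. by rewrite invr_gt0 subr_gt0; case/andP: Hg. Qed.

Let H_fix : 1 + g * H = H.
Proof. by field; rewrite subr_eq0 eq_sym lt_eqF //; case/andP: Hg. Qed.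

Lemma Q_range k : (0 < k)%N -> forall x a, 0 <= Q k x a <= H.
Proof.
case: k => // -[|k] _ x a; first by rewrite HQ1 lexx ltW.
by rewrite HQ //; apply: clipH_range; rewrite ltW.
Qed.

Lemma pi_policy k : is_policy (pi k).
Proof.
elim: k => [|k IH] // x.
exact: (ew_distr (IH x) Heta (Q_range (ltn0Sn k) x) (HV (ltn0Sn k) x) (Hpi (ltn0Sn k) x)).
Qed.

Lemma pi_pos k x a : 0 < pi 0%N x a -> 0 < pi k x a.
Proof. by move=> pos0; elim: k => // k IH; rewrite Hpi // mulr_gt0 ?expR_gt0. Qed.

Lemma V_range k : (0 < k)%N -> forall x, 0 <= V k x <= H.
Proof.
case: k => // k _ x.
exact: (ew_value_range (pi_policy k x) Heta (Q_range (ltn0Sn k) x) (HV (ltn0Sn k) x)).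
Qed.

Lemma V_first x : V 1%N x = 0.
Proof.
rewrite HV //; under eq_bigr do rewrite HQ1 mulr0 expR0 mulr1.
by rewrite (proj2 (Hpi0 x)) ln1 mulr0.
Qed.

Lemma pi_first x a : pi 1%N x a = pi 0%N x a.
Proof. by rewrite Hpi // HQ1 V_first subrr mulr0 expR0 mulr1. Qed.

(* Optimism: a valid bonus makes Q_{k+1} an upper estimate of the lookahead
   r + g P V_k, with overestimation at most 2 CB_k; clipping keeps this
   because the lookahead already lies in [0, H]. *)
Lemma Q_optimism k : (0 < k <= K)%N -> forall x a,
  r x a + g * applyP P (V k) x a <= Q k.+1 x a <=
  r x a + 2 * CB k x a + g * applyP P (V k) x a.
Proof.
move=> hk x a; have k_gt0 : (0 < k)%N by case/andP: hk.
set s := applyP P (V k) x a; set w := applyP (Ph k) (V k) x a.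
have /andP[s_ge0 s_leH] : 0 <= s <= H.
  apply/andP; split; last by apply: expect_le => // y; case/andP: (V_range k_gt0 y).
  apply: sumr_ge0 => y _; rewrite mulr_ge0 ?(proj1 (HP x a) y) //.
  by case/andP: (V_range k_gt0 y).
have err : `|g * s - g * w| <= CB k x a.
  have -> : g * s - g * w = g * \sum_y (P x a y - Ph k x a y) * V k y.
    by rewrite -mulrBr -sumrB; congr (_ * _); apply: eq_bigr => y _; ring.
  exact: Hval.
move: err; rewrite ler_norml => /andP[err_lo err_hi].
have /andP[r_ge0 r_le1] := Hr x a; have g_ge0 : 0 <= g by case/andP: Hg => /ltW.
have gs_le : g * s <= g * H by rewrite ler_wpM2l.
have lookahead_range : 0 <= r x a + g * s <= H.
  by apply/andP; split; [rewrite addr_ge0 ?mulr_ge0 | have := H_fix; lra].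
have le_lookahead : r x a + g * s <= r x a + CB k x a + g * w by lra.
have /andP[lo hi] := clipH_between lookahead_range le_lookahead.
by rewrite HQ // lo /=; apply: le_trans hi _; lra.
Qed.

(* Regret of epoch k, via optimism for the comparator (lower side) and for
   pi_k (upper side); the (1 - g) <nu0, V_k> terms of the flow equation cancel. *)
Lemma epoch_regret k : (0 < k <= K)%N ->
  inner (mu pis) r - inner (mu (pi k)) r <=
  2 * inner (mu (pi k)) (CB k)
  + (inner (mu pis) (Q k.+1) - expect (nu pis) (V k))
  - (inner (mu (pi k)) (Q k.+1) - expect (nu (pi k)) (V k)).
Proof.
move=> hk; pose lookahead x a := g * applyP P (V k) x a.
have lower : inner (mu pis) (fun x a => r x a + lookahead x a) <= inner (mu pis) (Q k.+1).
  apply: ler_inner => x a; first exact: (occ_ge0 HP Hg Hnu Hpis).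
  by case/andP: (Q_optimism hk x a).
have upper : inner (mu (pi k)) (Q k.+1) <=
    inner (mu (pi k)) (fun x a => (r x a + 2 * CB k x a) + lookahead x a).
  apply: ler_inner => x a; first exact: (occ_ge0 HP Hg Hnu (pi_policy k)).
  by case/andP: (Q_optimism hk x a).
rewrite innerD (inner_occ_next HP Hg Hnu Hpis) in lower.
rewrite innerD (inner_occ_next HP Hg Hnu (pi_policy k)) innerD innerZ in upper.
lra.
Qed.

Lemma value_le_mean k : (0 < k)%N -> expect (nu (pi k)) (V k) <= inner (mu (pi k)) (Q k).
Proof.
case: k => // k _; rewrite inner_occE; apply: ler_sum => x _.
rewrite ler_wpM2l ?(occ_state_ge0 HP Hg Hnu (pi_policy k.+1)) //.
exact: (ew_value_le_mean (pi_policy k x) Heta (Q_range (ltn0Sn k) x)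
          (HV (ltn0Sn k) x) (Hpi (ltn0Sn k) x)).
Qed.

(* pi_k differs from pi_{k-1} by at most eta H in l1 in every state, so the
   switch moves <mu, Q_k> by at most H/2 * H * eta H. *)
Lemma drift_step k : (0 < k)%N ->
  inner (mu (pi k)) (Q k) - inner (mu (pi k.-1)) (Q k) <= eta * H ^+ 3 / 2.
Proof.
case: k => // k _.
have tv x := ew_l1_step (pi_policy k x) Heta (Q_range (ltn0Sn k) x)
               (HV (ltn0Sn k) x) (Hpi (ltn0Sn k) x).
have -> : eta * H ^+ 3 / 2 = H / 2 * (H * (eta * H)) by ring.
exact: (inner_policy_change HP Hg Hnu (pi_policy k) (pi_policy k.+1) (ltW H_gt0)
          (Q_range (ltn0Sn k)) tv).
Qed.

(* Summed drift: the difference with the per-step drifts telescopes to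
   <mu_0, Q_1> - <mu_K, Q_{K+1}> <= 0. *)
Lemma drift_sum : \sum_(1 <= k < K.+1) (inner (mu (pi k)) (Q k) - inner (mu (pi k)) (Q k.+1))
  <= K%:R * (eta * H ^+ 3 / 2).
Proof.
have telescope : \sum_(1 <= k < K.+1) (inner (mu (pi k)) (Q k.+1) - inner (mu (pi k.-1)) (Q k)) =
    inner (mu (pi K)) (Q K.+1) - inner (mu (pi 0%N)) (Q 1%N).
  exact: (telescope_sumr (fun k => inner (mu (pi k.-1)) (Q k))).
have start : inner (mu (pi 0%N)) (Q 1%N) = 0.
  by apply: big1 => x _; apply: big1 => a _; rewrite HQ1 mulr0.
have last_ge0 : 0 <= inner (mu (pi K)) (Q K.+1).
  apply: inner_ge0 => x a; first exact: (occ_ge0 HP Hg Hnu (pi_policy K)).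
  by case/andP: (Q_range (ltn0Sn K) x a).
have drifts : \sum_(1 <= k < K.+1) (inner (mu (pi k)) (Q k) - inner (mu (pi k.-1)) (Q k))
    <= K%:R * (eta * H ^+ 3 / 2).
  apply: (@le_trans _ _ (\sum_(1 <= k < K.+1) (eta * H ^+ 3 / 2))).
    by apply: ler_sum_nat => k /andP[k_gt0 _]; exact: drift_step.
  by rewrite sumr_const_nat subn1 /= mulr_natl.
have -> : \sum_(1 <= k < K.+1) (inner (mu (pi k)) (Q k) - inner (mu (pi k)) (Q k.+1)) =
    \sum_(1 <= k < K.+1) (inner (mu (pi k)) (Q k) - inner (mu (pi k.-1)) (Q k)) -
    \sum_(1 <= k < K.+1) (inner (mu (pi k)) (Q k.+1) - inner (mu (pi k.-1)) (Q k)).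
  by rewrite -sumrB; apply: eq_bigr => k _; ring.
rewrite telescope start; lra.
Qed.

Lemma comparator_value_telescope :
  \sum_(1 <= k < K.+1) (expect (nu pis) (V k.+1) - expect (nu pis) (V k)) <= H.
Proof.
rewrite (telescope_sumr (fun k => expect (nu pis) (V k))) //.
rewrite (_ : expect _ (V 1%N) = 0); last by apply: big1 => x _; rewrite V_first mulr0.
rewrite subr0; apply: expect_le => [|x]; first exact: (occ_state_distr HP Hg Hnu Hpis).
by case/andP: (V_range (ltn0Sn K) x).
Qed.

Lemma regret_decomposition :
  \sum_(1 <= k < K.+1) (inner (mu pis) r - inner (mu (pi k)) r) <=
  2 * \sum_(1 <= k < K.+1) inner (mu (pi k)) (CB k)
  + \sum_(1 <= k < K.+1) (inner (mu pis) (Q k.+1) - expect (nu pis) (V k.+1))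
  + H + K%:R * (eta * H ^+ 3 / 2).
Proof.
apply: (@le_trans _ _ (\sum_(1 <= k < K.+1) (2 * inner (mu (pi k)) (CB k)
    + (inner (mu pis) (Q k.+1) - expect (nu pis) (V k.+1))
    + (expect (nu pis) (V k.+1) - expect (nu pis) (V k))
    + (inner (mu (pi k)) (Q k) - inner (mu (pi k)) (Q k.+1))))).
  apply: ler_sum_nat => k /andP[k_gt0 k_le].
  have hk : (0 < k <= K)%N by rewrite k_gt0 -ltnS.
  by have := epoch_regret hk; have := value_le_mean k_gt0; lra.
rewrite big_split /= big_split /= big_split /= -mulr_sumr.
by have := drift_sum; have := comparator_value_telescope; lra.
Qed.

(* In each state the mirror-descent terms telescope in ln pi_k, leaving
   (KL(pis || pi_0) - KL(pis || pi_{K+1})) / eta <= KL(pis || pi_0) / eta. *)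
Lemma state_mirror_descent x : (forall a, 0 < pis x a -> 0 < pi 0%N x a) ->
  \sum_(1 <= k < K.+1) (expect (pis x) (Q k.+1 x) - V k.+1 x)
  <= eta^-1 * kl_sum (pis x) (pi 0%N x).
Proof.
move=> abs_cont; have pos k a : 0 < pis x a -> 0 < pi k x a by move/abs_cont/pi_pos.
under eq_bigr => k _ do rewrite (ew_mirror_identity Heta (Hpi (ltn0Sn k) x) (Hpis x) (pos k)).
rewrite -mulr_sumr ler_wpM2l ?invr_ge0 ?(ltW Heta) // exchange_big /=.
under eq_bigr => a _ do rewrite -mulr_sumr (telescope_sumr (fun k => ln (pi k x a))) // pi_first.
rewrite -(kl_sum_sub abs_cont (pos K.+1)) gerBl.
exact: (kl_sum_ge0 (Hpis x) (pi_policy K.+1 x) (pos K.+1)).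
Qed.

Lemma mirror_descent_sum :
  (forall x, 0 < nu pis x -> [forall a, (0 < pis x a) ==> (0 < pi 0%N x a)]) ->
  \sum_(1 <= k < K.+1) (inner (mu pis) (Q k.+1) - expect (nu pis) (V k.+1))
  <= eta^-1 * \sum_(x | 0 < nu pis x) nu pis x * kl_sum (pis x) (pi 0%N x).
Proof.
move=> abs_cont.
have -> : \sum_(1 <= k < K.+1) (inner (mu pis) (Q k.+1) - expect (nu pis) (V k.+1)) =
    \sum_(1 <= k < K.+1) \sum_x nu pis x * (expect (pis x) (Q k.+1 x) - V k.+1 x).
  apply: eq_bigr => k _; rewrite inner_occE /expect -sumrB.
  by apply: eq_bigr => x _; rewrite mulrBr.
rewrite exchange_big [X in _ <= _ * X]big_mkcond mulr_sumr /=; apply: ler_sum => x _.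
rewrite -mulr_sumr; case: ifPn => [nu_x_gt0 | nu_x_le0].
  rewrite mulrCA ler_wpM2l ?(occ_state_ge0 HP Hg Hnu Hpis) //.
  apply: state_mirror_descent => a; apply/implyP; move: a; apply/forallP; exact: abs_cont.
have -> : nu pis x = 0.
  by apply/eqP; rewrite eq_le (occ_state_ge0 HP Hg Hnu Hpis) andbT leNgt.
by rewrite !mul0r mulr0.
Qed.

End OptimisticPolicyIteration.

Theorem lemma2 (R : realType) (X A : finType)
  (r : X -> A -> R) (P : X -> A -> X -> R) (g : R) (nu0 : X -> R)
  (pis : X -> A -> R) (eta : R) (K : nat)
  (pi : nat -> X -> A -> R) (Q : nat -> X -> A -> R) (V : nat -> X -> R)
  (CB : nat -> X -> A -> R) (Ph : nat -> X -> A -> X -> R) :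
  (forall x a, 0 <= r x a <= 1) ->
  is_kernel P ->
  0 < g < 1 ->
  is_distr nu0 ->
  is_optimal P g r pis ->
  0 < eta ->
  is_policy (pi 0%N) ->
  (forall x a, Q 1%N x a = 0) ->
  (forall k, (0 < k)%N -> forall x,
     V k x = eta^-1 * ln (\sum_(a : A) pi k.-1 x a * expR (eta * Q k x a))) ->
  (forall k, (0 < k)%N -> forall x a,
     pi k x a = pi k.-1 x a * expR (eta * (Q k x a - V k x))) ->
  (forall k, (0 < k)%N -> forall x a,
     Q k.+1 x a = clipH (1 - g)^-1
                    (r x a + CB k x a + g * applyP (Ph k) (V k) x a)) ->
  (forall k, (0 < k <= K)%N -> forall x a, 0 <= CB k x a) ->
  (forall k, (0 < k <= K)%N -> forall x a,
     `| g * \sum_(x' : X) (P x a x' - Ph k x a x') * V k x' | <= CB k x a) ->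
  ((\sum_(1 <= k < K.+1)
      (inner (occ P g nu0 pis) r - inner (occ P g nu0 (pi k)) r))%:E
   <= (2 * \sum_(1 <= k < K.+1) inner (occ P g nu0 (pi k)) (CB k)
       + 2 * (1 - g)^-1
       + eta * ((1 - g)^-1) ^+ 3 * K%:R / 2)%:E
      + (eta^-1)%:E * cond_rel_ent P g nu0 pis (pi 0%N))%E.
Proof.
move=> Hr HP Hg Hnu [Hpis _] Heta Hpi0 HQ1 HV Hpi HQ _ Hval.
have regret := regret_decomposition Hr HP Hg Hnu Hpis Heta Hpi0 HQ1 HV Hpi HQ Hval.
have H_gt0 : 0 < (1 - g)^-1 by rewrite invr_gt0 subr_gt0; case/andP: Hg.
have -> : eta * ((1 - g)^-1) ^+ 3 * K%:R / 2 = K%:R * (eta * ((1 - g)^-1) ^+ 3 / 2) by ring.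
set nus := occ_state P g nu0 pis.
case: (boolP [forall x, (0 < nus x) ==> [forall a, (0 < pis x a) ==> (0 < pi 0%N x a)]]).
- move=> /forallP abs_cont.
  have abs_cont_on_support x : 0 < nus x -> [forall a, (0 < pis x a) ==> (0 < pi 0%N x a)].
    by apply/implyP; exact: abs_cont.
  rewrite cond_rel_ent_finite // -EFinM -EFinD lee_fin.
  by have := mirror_descent_sum K HP Hg Hnu Hpis Heta Hpi0 HQ1 HV Hpi HQ abs_cont_on_support; lra.
- move=> /forallPn[x0]; rewrite negb_imply => /andP[nus_x0 not_abs_cont].
  rewrite (cond_rel_ent_infinite HP Hg Hnu Hpis Hpi0 nus_x0 not_abs_cont).
  by rewrite gt0_muley ?lte_fin ?invr_gt0 // addey // leey.
Qed.
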